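(* Let $H \le K \le G$ be finite groups and let $U$ be an irreducible complex representation of $K$ with $U^H \ne 0$. Let $W = \mathrm{Ind}_K^G(U)$ (with $U$ identified with the summand $eU \subseteq W$), and let $V$ be an irreducible $G$-subrepresentation of $W$ (regarded also as a $K$-representation by restriction). Then: (1) $G_{(W^H)} \subseteq K_{(U^H)}$; (2) $V^H \ne 0$ and $K_{(V^H)} \subseteq K_{(U^H)}$; (3) if $K_{(U^H)} = H$, then $G_{(W^H)} = K_{(V^H)} = H$.
   Context: For a group $L$ acting linearly on a space $Y$, a subgroup $M \le L$ and a subspace $X \subseteq Y$: $Y^M = \{y \in Y : my = y \ \forall m \in M\}$ and $L_{(X)} = \{l \in L : lx = x \ \forall x \in X\}$. With $G/K = \{g_1K, \dots, g_sK\}$, $g_1 = e$, the induced representation $\mathrm{Ind}_K^G(U)$ is $\bigoplus_i g_iU$ with action $g\cdot \sum_i g_iu_i = \sum_i g_{\tau(i,g)}(k_{i,g}u_i)$ where $gg_i = g_{\tau(i,g)}k_{i,g}$, $k_{i,g} \in K$. *)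

From HB Require Import structures.
From mathcomp Require Import all_boot all_order all_algebra all_fingroup all_solvable all_field all_character.
Set Implicit Arguments. Unset Strict Implicit. Unset Printing Implicit Defensive.
Import GRing.Theory.
Local Open Scope ring_scope.

(* Convention: MathComp representations act on row vectors on the right
   (v |-> v *m rG x).  The induced representation is therefore built from a
   right transversal g_0,...,g_(s-1) of K in G (G = disjoint union of K g_i),
   W = (+)_i U (x) g_i, with (u (x) g_i) x = (u k) (x) g_j where g_i x = k g_j.
   Index set of W: pairs (i, p) with i : 'I_s (coset) and p : 'I_n (coordinate
   in U), enumerated through enum_val. *)

Definition ind_dim (s n : nat) := #|{: 'I_s * 'I_n}|.

Definition is_rtransversal (gT : finGroupType) (K G : {set gT}) (s : nat)
    (g : 'I_s -> gT) : Prop :=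
  (forall i, g i \in G) /\
  (forall x, x \in G -> exists! i, x * (g i)^-1 \in K)%g.

Definition ind_mx (gT : finGroupType) (K : {group gT}) (n : nat)
    (rU : mx_representation algC K n) (s : nat) (g : 'I_s -> gT) (x : gT)
    : 'M[algC]_(ind_dim s n) :=
  \matrix_(a, b)
    let ip := enum_val a in let jq := enum_val b in
    let y := (g ip.1 * x * (g jq.1)^-1)%g in
    if y \in K then rU y ip.2 jq.2 else 0.

From HB Require Import structures.
From mathcomp Require Import all_boot all_order all_algebra all_fingroup all_solvable all_field all_character.
Import GRing.Theory.
Local Open Scope ring_scope.

(* Let P : W -> U be the projection onto the block U = U (x) g_i0 with g_i0 = 1,
   and P^T : U -> W the corresponding embedding. Both are K-equivariant, and
   P^T rW(x) P = [x \in K] rU(x). Hence an element fixing W^H, which contains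
   U^H P^T, must lie in K and fix U^H: this is (1). For (2), V P is a nonzero
   K-submodule of U (the G-translates of V cover every block), so V P = U by
   irreducibility; averaging over H a preimage in V of any u \in U^H gives an
   element of V :&: W^H projecting to |H| u. Thus U^H <= (V :&: W^H) P, which
   yields both V^H != 0 and the inclusion of stabilisers. (3) follows because
   H fixes W^H and V^H pointwise. *)

Set Implicit Arguments.
Unset Strict Implicit.
Unset Printing Implicit Defensive.

Lemma rfix_mx_sum (F : fieldType) (gT : finGroupType) (G H : {group gT})
    (m : nat) (rG : mx_representation F G m) (w : 'rV_m) :
  H \subset G -> ((\sum_(h in H) w *m rG h)%R <= rfix_mx rG H)%MS.
Proof.
move=> sHG; apply/rfix_mxP => x Hx; have Gx := subsetP sHG x Hx.
rewrite mulmx_suml (eq_bigr (fun h => w *m rG (h * x)%g)); last first.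
  by move=> h Hh; rewrite repr_mxM ?mulmxA // (subsetP sHG).
rewrite (reindex_inj (mulIg x^-1)%g) /=.
by apply: eq_big => [h | h _]; rewrite ?groupMr ?groupV // mulgKV.
Qed.

Section IndProj.
Variables (R : comNzRingType) (s n : nat).
Local Notation N := (ind_dim s n).

Definition ind_proj (j : 'I_s) : 'M[R]_(N, n) :=
  \matrix_(a, p) (enum_val a == (j, p))%:R.

Lemma mul_ind_projE m (A : 'M_(m, N)) j r p :
  (A *m ind_proj j) r p = A r (enum_rank (j, p)).
Proof.
rewrite !mxE (bigD1 (enum_rank (j, p))) //= !mxE enum_rankK eqxx mulr1.
rewrite big1 ?addr0 // => a ne; rewrite !mxE.
by case: eqP => [e|]; [move: ne; rewrite -e enum_valK eqxx | rewrite mulr0].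
Qed.

Lemma ind_projT_mulE m (A : 'M_(N, m)) j p b :
  ((ind_proj j)^T *m A) p b = A (enum_rank (j, p)) b.
Proof. by rewrite -[_ *m A]trmxK trmx_mul trmxK mxE mul_ind_projE mxE. Qed.

Lemma ind_proj_mulE (M : 'M[R]_n) j a p :
  (ind_proj j *m M) a p = if (enum_val a).1 == j then M (enum_val a).2 p else 0.
Proof.
rewrite !mxE; case: eqP => [e | ne].
  rewrite (bigD1 (enum_val a).2) //= !mxE -e -surjective_pairing eqxx mul1r.
  rewrite big1 ?addr0 // => q nq; rewrite !mxE.
  by case: eqP => [e2|]; [move: nq; rewrite e2 eqxx | rewrite mul0r].
rewrite big1 // => q _; rewrite !mxE.
by case: eqP => [e2|]; [case: ne; rewrite e2 | rewrite mul0r].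
Qed.

Lemma mul_ind_projTE (M : 'M[R]_n) j p b :
  (M *m (ind_proj j)^T) p b = if (enum_val b).1 == j then M p (enum_val b).2 else 0.
Proof.
rewrite -[_ *m _]trmxK trmx_mul trmxK mxE ind_proj_mulE !mxE.
by case: ifP.
Qed.

Lemma ind_projTK j : (ind_proj j)^T *m ind_proj j = 1%:M.
Proof.
apply/matrixP => p q; rewrite mul_ind_projE !mxE enum_rankK xpair_eqE eqxx.
by rewrite eq_sym.
Qed.

End IndProj.

Section Induced.
Variables (gT : finGroupType) (K G : {group gT}) (sKG : K \subset G).
Variables (n : nat) (rU : mx_representation algC K n).
Variables (s : nat) (g : 'I_s -> gT) (i0 : 'I_s).
Hypotheses (hg : is_rtransversal K G g) (hg0 : g i0 = 1%g).
Variable rW : mx_representation algC G (ind_dim s n).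
Hypothesis hW : forall x, x \in G -> rW x = ind_mx rU g x.

Local Notation P := (@ind_proj algC s n i0).

Lemma rtransversal_uniq x i j :
  x \in G -> (x * (g i)^-1 \in K)%g -> (x * (g j)^-1 \in K)%g -> i = j.
Proof.
move=> Gx xi xj; case: hg => _ /(_ x Gx) [i1 [_ u]].
by rewrite -(u i xi) -(u j xj).
Qed.

Lemma rtransversal_mem j : g j \in G.
Proof. by case: hg. Qed.

Lemma rtransversal_memK j : g j \in K -> j = i0.
Proof.
move=> Kgj; apply: (@rtransversal_uniq 1%g); rewrite ?group1 // mul1g ?hg0.
  by rewrite groupV.
by rewrite invg1 group1.
Qed.

Lemma ind_projT_repr k : k \in K -> P^T *m rW k = rU k *m P^T.
Proof.
move=> Kk; apply/matrixP => p b.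
rewrite ind_projT_mulE mul_ind_projTE hW ?(subsetP sKG) // mxE enum_rankK /=.
rewrite hg0 mul1g; case: eqP => [-> | ne]; first by rewrite hg0 invg1 mulg1 Kk.
case: ifP => // Ky; case: ne; apply: rtransversal_memK.
by rewrite -groupV -(groupMl _ Kk).
Qed.

Lemma repr_ind_proj k : k \in K -> rW k *m P = P *m rU k.
Proof.
move=> Kk; apply/matrixP => a p.
rewrite mul_ind_projE ind_proj_mulE hW ?(subsetP sKG) // mxE enum_rankK /=.
rewrite hg0 invg1 mulg1; case: eqP => [-> | ne]; first by rewrite hg0 mul1g Kk.
case: ifP => // Ky; case: ne; apply: rtransversal_memK.
by rewrite -(groupMr _ Kk).
Qed.

Lemma ind_projT_repr_proj x : x \in G ->
  P^T *m rW x *m P = if x \in K then rU x else 0.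
Proof.
move=> Gx; apply/matrixP => p q.
rewrite mul_ind_projE ind_projT_mulE hW // mxE !enum_rankK /=.
by rewrite hg0 invg1 mulg1 mul1g; case: ifP; rewrite ?mxE.
Qed.

Lemma repr_rtransversal_proj j : rW (g j)^-1%g *m P = @ind_proj algC s n j.
Proof.
apply/matrixP => a p.
rewrite mul_ind_projE hW ?groupV ?rtransversal_mem // mxE enum_rankK /=.
rewrite hg0 invg1 mulg1 mxE; case: (enum_val a) => i q /=; rewrite xpair_eqE.
case: eqP => [-> | ne]; first by rewrite mulgV group1 repr_mx1 mxE.
case: ifP => // Ky; case: ne.
by apply: (@rtransversal_uniq (g i)); rewrite ?rtransversal_mem ?mulgV.
Qed.

Lemma rstab_ind_projT m (A : 'M_(m, n)) :
  A != 0 -> rstab rW (A *m P^T) \subset rstab rU A.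
Proof.
move=> nzA; apply/subsetP => x; rewrite inE => /andP [Gx /eqP fixA].
have AxA : A *m (if x \in K then rU x else 0) = A.
  by rewrite -ind_projT_repr_proj // !mulmxA fixA -mulmxA ind_projTK mulmx1.
have Kx : x \in K by apply: contraR nzA => notKx; rewrite -AxA (negPf notKx) mulmx0.
by rewrite inE Kx; move: AxA; rewrite Kx => /eqP.
Qed.

Lemma rstab_ind_proj m (A : 'M_(m, ind_dim s n)) :
  K :&: rstab rW A \subset rstab rU (A *m P).
Proof.
apply/subsetP => x; rewrite !inE => /andP [Kx /andP [_ /eqP fixA]].
by rewrite Kx -mulmxA -repr_ind_proj // mulmxA fixA eqxx.
Qed.

Lemma mxmodule_ind_proj m (V : 'M_(m, ind_dim s n)) :
  mxmodule rW V -> mxmodule rU (V *m P).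
Proof.
move=> modV; apply/mxmoduleP => k Kk; rewrite -mulmxA -repr_ind_proj // mulmxA.
by rewrite submxMr // (mxmoduleP modV) ?(subsetP sKG).
Qed.

(* Every row of V can be moved by some rW (g j)^-1 into the block U (x) g_i0. *)
Lemma mxmodule_ind_proj_eq0 m (V : 'M_(m, ind_dim s n)) :
  mxmodule rW V -> (V *m P == 0) = (V == 0).
Proof.
move=> modV; apply/eqP/eqP => [VP0 | ->]; last exact: mul0mx.
apply/matrixP => r a; rewrite mxE.
have -> : V r a = (V *m @ind_proj algC s n (enum_val a).1) r (enum_val a).2.
  by rewrite mul_ind_projE -surjective_pairing enum_valK.
rewrite -repr_rtransversal_proj mulmxA.
have /submxP [D ->] : (V *m rW (g (enum_val a).1)^-1%g <= V)%MS.
  by apply: (mxmoduleP modV); rewrite groupV rtransversal_mem.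
by rewrite -mulmxA VP0 mulmx0 mxE.
Qed.

Lemma ind_proj_row_full m (V : 'M_(m, ind_dim s n)) :
  mx_irreducible rU -> mxmodule rW V -> V != 0 -> row_full (V *m P).
Proof.
move=> /mx_irrP [_ irrU] modV nzV.
have : row_full <<V *m P>>%MS.
  apply: irrU; first by rewrite (eqmx_module _ (genmxE _)) mxmodule_ind_proj.
  by rewrite -mxrank_eq0 genmxE mxrank_eq0 mxmodule_ind_proj_eq0.
by rewrite /row_full genmxE.
Qed.

Section FixedPoints.
Variables (H : {group gT}) (sHK : H \subset K).

Lemma rfix_ind_projT : (rfix_mx rU H *m P^T <= rfix_mx rW H)%MS.
Proof.
apply/rfix_mxP => h Hh.
by rewrite -mulmxA ind_projT_repr ?(subsetP sHK) // mulmxA rfix_mx_id.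
Qed.

Lemma rfix_sub_cap_rfix_proj m (V : 'M_(m, ind_dim s n)) :
  mxmodule rW V -> row_full (V *m P) ->
  (rfix_mx rU H <= (V :&: rfix_mx rW H) *m P)%MS.
Proof.
move=> modV fullVP; have sHG := subset_trans sHK sKG.
apply/row_subP => i; set u := row i _.
have /submxP [d du] : (u <= V *m P)%MS by apply: submx_full.
set v := \sum_(h in H) d *m V *m rW h.
have Vv : (v <= V)%MS.
  apply: summx_sub => h Hh; rewrite (submx_trans _ (mxmoduleP modV h _)) //.
    by rewrite submxMr // submxMl.
  exact: subsetP sHG h Hh.
have vP : v *m P = #|H|%:R *: u.
  rewrite mulmx_suml (eq_bigr (fun _ => u)) ?sumr_const ?scaler_nat //.
  move=> h Hh; rewrite -mulmxA repr_ind_proj ?(subsetP sHK) // mulmxA.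
  by rewrite -(mulmxA d V) -du (rfix_mxP H (row_sub i _)).
have nzH : (#|H|%:R : algC) != 0 by rewrite Num.Theory.pnatr_eq0 -lt0n cardG_gt0.
rewrite -[u](scalerK nzH) -vP scalemx_sub // submxMr // sub_capmx Vv.
exact: rfix_mx_sum.
Qed.

End FixedPoints.

End Induced.

Theorem lemma3p8 (gT : finGroupType) (H K G : {group gT})
  (sHK : H \subset K) (sKG : K \subset G)
  (n : nat) (rU : mx_representation algC K n)
  (irrU : mx_irreducible rU) (UH_nz : rfix_mx rU H != 0)
  (s : nat) (g : 'I_s -> gT) (i0 : 'I_s)
  (hg : is_rtransversal K G g) (hg0 : g i0 = 1%g)
  (rW : mx_representation algC G (ind_dim s n))
  (hW : forall x, x \in G -> rW x = ind_mx rU g x)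
  (V : 'M[algC]_(ind_dim s n)) (simV : mxsimple rW V) :
  [/\ rstab rW (rfix_mx rW H) \subset rstab rU (rfix_mx rU H),
      (V :&: rfix_mx rW H)%MS != 0
      /\ K :&: rstab rW (V :&: rfix_mx rW H)%MS \subset rstab rU (rfix_mx rU H)
    & rstab rU (rfix_mx rU H) = H ->
        rstab rW (rfix_mx rW H) = H
        /\ K :&: rstab rW (V :&: rfix_mx rW H)%MS = H].
Proof.
have sHG := subset_trans sHK sKG.
have [modV nzV _] := simV.
have part1 : rstab rW (rfix_mx rW H) \subset rstab rU (rfix_mx rU H).
  apply: subset_trans _ (rstab_ind_projT hg0 hW UH_nz).
  exact/rstabS/(rfix_ind_projT sKG hg hg0 hW sHK).
have UH_sub := rfix_sub_cap_rfix_proj sKG hg hg0 hW sHK modV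
  (ind_proj_row_full sKG hg hg0 hW irrU modV nzV).
have part2a : (V :&: rfix_mx rW H)%MS != 0.
  apply: contraNneq UH_nz => V0.
  by rewrite -submx0 (submx_trans UH_sub) // V0 mul0mx sub0mx.
have part2b : K :&: rstab rW (V :&: rfix_mx rW H)%MS \subset rstab rU (rfix_mx rU H).
  exact: subset_trans (rstab_ind_proj sKG hg hg0 hW _) (rstabS _ UH_sub).
split => // stabUH; split; apply/eqP; rewrite eqEsubset.
  by rewrite (subset_trans part1) ?stabUH //= rfix_mx_rstabC.
by rewrite (subset_trans part2b) ?stabUH //= subsetI sHK rfix_mx_rstabC ?capmxSr.
Qed.
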